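(* For any finite simple graph $G$ of order $n$ with $v_{even}(G)=1$, $\gamma_s'(G)\le n-1$.
   Context: A signed edge domination function (SEDF) of $G$ is $f:E(G)\to\{1,-1\}$ with $\sum_{e'\in E_G(u)\cup E_G(v)}f(e')\ge1$ for every edge $uv$, where $E_G(x)$ is the set of edges incident with $x$; $\gamma_s'(G)$ is the minimum of $\sum_{e\in E(G)}f(e)$ over all SEDFs. $v_{even}(G)$ is the number of vertices of even degree in $G$. *)

From mathcomp Require Import all_boot all_order all_algebra.
Set Implicit Arguments. Unset Strict Implicit. Unset Printing Implicit Defensive.
Import Order.TTheory GRing.Theory Num.Theory.

(* A finite simple graph: vertex type T : finType, adjacency adj : rel T,
   assumed symmetric and irreflexive (hypotheses of the theorem). *)

Section Graph.
Variables (T : finType) (adj : rel T).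

Definition edges : {set {set T}} :=
  [set e : {set T} | [exists x, exists y, adj x y && (e == [set x; y])]].

Definition deg (v : T) : nat := #|[set w | adj v w]|.
Definition v_even : nat := #|[set v : T | ~~ odd (deg v)]|.

(* A function E(G) -> {1,-1}, encoded by a boolean: true = 1, false = -1.
   Values on non-edges are irrelevant. *)
Definition sgn (b : bool) : int := if b then 1%R else (-1)%R.

Definition closed_sum (f : {ffun {set T} -> bool}) (u v : T) : int :=
  (\sum_(e in edges | (u \in e) || (v \in e)) sgn (f e))%R.

Definition is_SEDF (f : {ffun {set T} -> bool}) : bool :=
  [forall u, forall v, adj u v ==> (1 <= closed_sum f u v)%R].

Definition weight (f : {ffun {set T} -> bool}) : int :=
  (\sum_(e in edges) sgn (f e))%R.

(* The all-(+1) function is an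
   SEDF of weight |E|, which is the maximum possible weight, so |E| as the
   neutral element of the min does not change the value. *)
Definition gamma_s' : int :=
  \big[Order.min/(Posz #|edges|)]_(f : {ffun {set T} -> bool} | is_SEDF f) weight f.

End Graph.

(* A signed star function, one with f(E(v)) >= 1 at every non-isolated vertex v, is an
   SEDF: for an edge uv the sum over E(u) ∪ E(v) is f(E(u)) + f(E(v)) - f(uv) >= 1.
   So it suffices to find a signed star function of weight at most n - 1.  If an edge set
   has m non-isolated vertices and at most two non-isolated vertices of even degree, it has
   a signed star function of weight at most m - 1, or m when there are exactly two such
   even vertices.  This is proved by induction on the number of edges: delete one edge, or
   a path of two edges, chosen around an even vertex (or anywhere when all degrees are odd),
   and extend the function found for the smaller edge set.  A deleted edge receives -1 only
   when both of its ends become even in the smaller edge set, where parity forces a signed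
   degree of at least 2. *)

From mathcomp Require Import all_boot all_order all_algebra zify.
Set Implicit Arguments. Unset Strict Implicit. Unset Printing Implicit Defensive.
Import Order.TTheory GRing.Theory Num.Theory.

Lemma sum_sgn (I : finType) (P : pred I) (b : I -> bool) :
  (\sum_(i | P i) sgn (b i) = #|P|%:Z - 2 * #|[pred i | P i && ~~ b i]|%:Z)%R.
Proof.
rewrite (bigID b) /= -(cardID b P).
rewrite [X in (X + _)%R](eq_bigr (fun=> 1%R)); last by move=> i /andP[_ ->].
rewrite [X in (_ + X)%R](eq_bigr (fun=> (-1)%R)); last by move=> i /andP[_ /negbTE ->].
rewrite !sumr_const mulNrn !natz.
rewrite (eq_card (A := [predI P & b]) (B := fun i => P i && b i)) //.
rewrite (eq_card (A := [predD P & b]) (B := fun i => P i && ~~ b i)) => [|i]; last first.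
  by rewrite !inE andbC.
by rewrite (eq_card (A := [pred i | P i & ~~ b i]) (B := fun i => P i && ~~ b i)) //; lia.
Qed.

Lemma count_mem_le_card (T : finType) (A : {set T}) (s : seq T) :
  uniq s -> count (mem A) s <= #|A|.
Proof.
move=> s_uniq; rewrite -size_filter cardE.
by apply: uniq_leq_size; [exact: filter_uniq | move=> x; rewrite mem_filter mem_enum => /andP[]].
Qed.

Lemma card_eq_off_seq (T : finType) (A B : {set T}) (s : seq T) :
  uniq s -> (forall x, x \notin s -> (x \in A) = (x \in B)) ->
  #|A| + count (mem B) s = #|B| + count (mem A) s.
Proof.
move=> s_uniq AB.
have split_card (C : {set T}) : #|C| = count (mem C) s + #|[predD C & mem s]|.
  rewrite -(cardID (mem s) C) -size_filter; congr (_ + _).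
  rewrite -(card_uniqP (filter_uniq _ s_uniq)); apply: eq_card => x.
  by rewrite !inE mem_filter andbC.
have offAB : #|[predD A & mem s]| = #|[predD B & mem s]|.
  by apply: eq_card => x; rewrite !inE; case: (boolP (x \in s)) => //= /AB.
have := split_card A; have := split_card B; lia.
Qed.

Lemma set2_inj (T : finType) (v : T) : injective (fun w => [set v; w]).
Proof.
move=> w1 w2 /= e12.
have /set2P[w1v | //] : w1 \in [set v; w2] by rewrite -e12 set22.
have /set2P[w2v | //] : w2 \in [set v; w1] by rewrite e12 set22.
by rewrite w1v w2v.
Qed.

(** * Signed star functions on edge sets *)

Section SignedStars.
Variable T : finType.
Implicit Types (E : {set {set T}}) (e : {set T}) (f : {ffun {set T} -> bool}).

(* Graphs are handled through their edge sets, so that the induction can delete edges. *)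
Definition simple_edge_set E := {in E, forall e, #|e| = 2}.

Definition degree E v := #|[set e in E | v \in e]|.
Definition signed_degree E f v : int := (\sum_(e in E | v \in e) sgn (f e))%R.
Definition signed_weight E f : int := (\sum_(e in E) sgn (f e))%R.

Definition nonisolated E := [set v | 0 < degree E v].
Definition even_vertices E := [set v | 0 < degree E v & ~~ odd (degree E v)].

Definition signed_star E f := {in nonisolated E, forall v, (0 < signed_degree E f v)%R}.

Definition set_sign f e b : {ffun {set T} -> bool} :=
  [ffun e' => if e' == e then b else f e'].

Lemma signed_degreeE E f v :
  signed_degree E f v = ((degree E v)%:Z - 2 * #|[set e in E | v \in e & ~~ f e]|%:Z)%R.
Proof.
rewrite /signed_degree sum_sgn /degree !cardsE.
by congr (_ - 2 * _%:Z)%R; apply: eq_card => e; rewrite !inE -andbA.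
Qed.

Lemma signed_star_ge0 E f v : signed_star E f -> (0 <= signed_degree E f v)%R.
Proof.
move=> st; case: (posnP (degree E v)) => [d0 | dpos]; last first.
  by apply: ltW; apply: st; rewrite inE.
have : #|[set e in E | v \in e & ~~ f e]| <= degree E v.
  by apply/subset_leq_card/subsetP => e; rewrite !inE => /and3P[-> ->].
rewrite signed_degreeE d0; lia.
Qed.

Lemma signed_star_even E f v :
  signed_star E f -> v \in even_vertices E -> (2 <= signed_degree E f v)%R.
Proof.
move=> st; rewrite inE => /andP[dpos even_d].
by have := st v; rewrite inE dpos signed_degreeE => /(_ isT); move: even_d; lia.
Qed.

Lemma degree_set0 v : degree set0 v = 0.
Proof. by apply/eqP; rewrite cards_eq0; apply/eqP/setP => e; rewrite !inE. Qed.

Lemma degree_setD1 E e v : e \in E -> degree E v = (v \in e) + degree (E :\ e) v.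
Proof.
move=> eE; rewrite /degree (cardsD1 e) !inE eE /=; congr (_ + _).
by apply: eq_card => e'; rewrite !inE andbA.
Qed.

Lemma degree_setD1_notin E e v : e \in E -> v \notin e -> degree (E :\ e) v = degree E v.
Proof. by move=> eE ve; rewrite (degree_setD1 v eE) (negbTE ve). Qed.

Lemma degree_setD1_off E e (s : seq T) : e \in E -> {subset e <= s} ->
  forall v, v \notin s -> degree (E :\ e) v = degree E v.
Proof. by move=> eE es v vs; apply: degree_setD1_notin => //; apply: contra vs; apply: es. Qed.

Lemma signed_degree_set_sign E e f b v : e \in E ->
  signed_degree E (set_sign f e b) v =
  ((if v \in e then sgn b else 0) + signed_degree (E :\ e) f v)%R.
Proof.
move=> eE; rewrite /signed_degree big_mkcondr (big_setD1 e eE) big_mkcondr /= ffunE eqxx.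
by congr (_ + _)%R; apply: eq_bigr => e'; rewrite !inE ffunE => /andP[/negbTE ->].
Qed.

Lemma signed_weight_set_sign E e f b : e \in E ->
  signed_weight E (set_sign f e b) = (sgn b + signed_weight (E :\ e) f)%R.
Proof.
move=> eE; rewrite /signed_weight (big_setD1 e eE) ffunE eqxx; congr (_ + _)%R.
by apply: eq_bigr => e'; rewrite !inE ffunE => /andP[/negbTE ->].
Qed.

Lemma signed_star_set_sign E e f b : e \in E -> signed_star (E :\ e) f ->
  (b = false -> e \subset even_vertices (E :\ e)) -> signed_star E (set_sign f e b).
Proof.
move=> eE st e_even v; rewrite inE => dpos; rewrite signed_degree_set_sign //.
case: (boolP (v \in e)) => ve; last first.
  by rewrite add0r; apply: st; rewrite inE degree_setD1_notin.
have := signed_star_ge0 v st; case: b e_even => [_ | /(_ erefl) /subsetP /(_ v ve) vE] /=.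
  lia.
by have := signed_star_even st vE; lia.
Qed.

(* m - 1 + [k = 2] for m non-isolated and k even vertices, and 0 for the empty edge set;
   the slack for k = 2 is what makes the induction go through. *)
Definition weight_bound E := (#|nonisolated E| + (#|even_vertices E| == 2)).-1.

Definition light_star E f := signed_star E f /\ (signed_weight E f <= weight_bound E)%R.

Definition reducible E :=
  exists2 E' : {set {set T}}, E' \proper E &
    #|even_vertices E'| <= 2 /\ forall f, light_star E' f -> exists g, light_star E g.

Lemma reducible_by E (E' : {set {set T}})
    (extend : {ffun {set T} -> bool} -> {ffun {set T} -> bool}) (delta : int) :
  E' \proper E -> #|even_vertices E'| <= 2 ->
  (forall f, signed_star E' f -> signed_star E (extend f)) ->
  (forall f, signed_weight E (extend f) = (delta + signed_weight E' f)%R) ->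
  (delta + weight_bound E' <= weight_bound E)%R -> reducible E.
Proof.
move=> ltE' few_even star_ext weight_ext bound_ext; exists E' => //; split => // f [st wt].
exists (extend f); split; first exact: star_ext.
by rewrite weight_ext; apply: le_trans bound_ext; rewrite lerD2l.
Qed.

(* How the numbers of non-isolated and of even vertices change when the degrees change
   only at the vertices of s. *)
Definition vertex_counts_after E (E' : {set {set T}}) (s : seq T) :=
  [/\ #|nonisolated E| + count (mem (nonisolated E')) s =
        #|nonisolated E'| + count (mem (nonisolated E)) s,
      #|even_vertices E| + count (mem (even_vertices E')) s =
        #|even_vertices E'| + count (mem (even_vertices E)) s,
      count (mem (nonisolated E)) s <= #|nonisolated E| &
      count (mem (even_vertices E)) s <= #|even_vertices E|].

Lemma vertex_counts E (E' : {set {set T}}) s : uniq s ->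
  (forall v, v \notin s -> degree E' v = degree E v) -> vertex_counts_after E E' s.
Proof.
move=> s_uniq same; split; try exact: count_mem_le_card;
  by apply: card_eq_off_seq => // v /same; rewrite !inE => ->.
Qed.

(** * Reduction steps *)

Section SimpleEdgeSet.
Variable E : {set {set T}}.
Hypothesis E_simple : simple_edge_set E.

Lemma edge_neq u v : [set u; v] \in E -> u != v.
Proof. by move/E_simple/eqP; rewrite cards2 eqSS eqb1. Qed.

Lemma edge_eq_set2 e u v : e \in E -> u \in e -> v \in e -> u != v -> e = [set u; v].
Proof.
move=> eE ue ve uv; apply/esym/eqP; rewrite eqEcard E_simple // cards2 uv andbT.
by apply/subsetP => z; rewrite !inE => /orP[]/eqP->.
Qed.

Lemma exists_neighbor_notin (S : {set T}) v :
  #|S| < degree E v -> exists2 y, [set v; y] \in E & y \notin S.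
Proof.
move=> ltS; apply/exists_inP; apply: contraLR ltS => /exists_inPn all_in; rewrite -leqNgt.
apply: leq_trans (leq_imset_card (fun y => [set v; y]) S).
apply/subset_leq_card/subsetP => e; rewrite inE => /andP[eE ve].
have /cards2P[a [b [ab e_ab]]] : #|e| == 2 by rewrite E_simple.
have [y e_vy] : exists y, e = [set v; y].
  by move: ve; rewrite e_ab !inE => /orP[]/eqP->; [exists b | exists a; rewrite setUC].
rewrite e_vy in eE *; apply: imset_f; rewrite -[y \in S]negbK; exact: all_in.
Qed.

Lemma edge_removal u v : [set u; v] \in E ->
  [/\ degree E u = (degree (E :\ [set u; v]) u).+1,
      degree E v = (degree (E :\ [set u; v]) v).+1 &
      vertex_counts_after E (E :\ [set u; v]) [:: u; v]].
Proof.
move=> uvE; split; first by rewrite (degree_setD1 u uvE) set21.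
  by rewrite (degree_setD1 v uvE) set22.
apply: vertex_counts; first by rewrite /= inE edge_neq.
by apply: degree_setD1_off => // z; rewrite !inE.
Qed.

Lemma path_removal a b c : [set a; b] \in E -> [set b; c] \in E -> a != c ->
  [/\ [set a; b] \in E :\ [set b; c],
      degree E a = (degree (E :\ [set b; c] :\ [set a; b]) a).+1,
      degree E b = (degree (E :\ [set b; c] :\ [set a; b]) b).+2,
      degree E c = (degree (E :\ [set b; c] :\ [set a; b]) c).+1 &
      vertex_counts_after E (E :\ [set b; c] :\ [set a; b]) [:: a; b; c]].
Proof.
move=> abE bcE ac; have ab := edge_neq abE; have bc := edge_neq bcE.
have abE' : [set a; b] \in E :\ [set b; c].
  rewrite !inE abE andbT; apply: contraNneq ac => abc.
  by have := set21 a b; rewrite abc !inE (negbTE ab).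
have deg1 z := degree_setD1 z bcE; have deg2 z := degree_setD1 z abE'.
split => //.
- by rewrite deg1 deg2 !inE eqxx (negbTE ab) (negbTE ac).
- by rewrite deg1 deg2 !inE !eqxx orbT.
- by rewrite deg1 deg2 !inE !eqxx orbT eq_sym (negbTE ac) eq_sym (negbTE bc).
apply: vertex_counts; first by rewrite /= !inE negb_or ab ac bc.
move=> z; rewrite !inE !negb_or => /and3P[za zb zc].
by rewrite deg1 deg2 !inE (negbTE za) (negbTE zb) (negbTE zc).
Qed.

Lemma edge_even_after_removal u v : [set u; v] \in E ->
  odd (degree E u) -> odd (degree E v) -> 1 < degree E u -> 1 < degree E v ->
  [set u; v] \subset even_vertices (E :\ [set u; v]).
Proof.
move=> uvE odd_u odd_v u2 v2; have [deg_u deg_v _] := edge_removal uvE.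
by apply/subsetP => z; rewrite !inE => /orP[]/eqP->; lia.
Qed.

Hypothesis E_few_even : #|even_vertices E| <= 2.

(* If v had odd degree while an even vertex exists, v would become another even vertex,
   raising the bound of the smaller edge set. *)
Lemma reduce_leaf u v : [set u; v] \in E -> degree E u = 1 ->
  #|even_vertices E| = 0 \/ v \in even_vertices E -> reducible E.
Proof.
move=> uvE du v_ok.
have [deg_u deg_v [cNI cEV leNI leEV]] := edge_removal uvE.
move: du; rewrite deg_u => /succn_inj du.
move: v_ok cNI cEV leNI leEV; rewrite /= !inE deg_u deg_v du /=.
move=> v_ok cNI cEV leNI leEV.
apply: (reducible_by (E' := E :\ [set u; v]) (delta := 1)
  (extend := fun f => set_sign f [set u; v] true)).
- exact: properD1.
- lia.
- by move=> f st; apply: signed_star_set_sign.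
- by move=> f; rewrite signed_weight_set_sign.
- rewrite /weight_bound; lia.
Qed.

Lemma reduce_even_edge u v : [set u; v] \in E ->
  u \in even_vertices E -> v \in even_vertices E -> reducible E.
Proof.
move=> uvE; have [deg_u deg_v [cNI cEV leNI leEV]] := edge_removal uvE.
move: cNI cEV leNI leEV; rewrite /= !inE deg_u deg_v /= => cNI cEV leNI leEV u_even v_even.
have same_m : #|nonisolated (E :\ [set u; v])| = #|nonisolated E| by lia.
have less_k : #|even_vertices (E :\ [set u; v])| = #|even_vertices E| - 2 by lia.
clear cNI cEV.
apply: (reducible_by (E' := E :\ [set u; v]) (delta := 1)
  (extend := fun f => set_sign f [set u; v] true)).
- exact: properD1.
- by rewrite less_k; apply: leq_trans (leq_subr _ _) E_few_even.
- by move=> f st; apply: signed_star_set_sign.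
- by move=> f; rewrite signed_weight_set_sign.
- rewrite /weight_bound same_m less_k; lia.
Qed.

Lemma reduce_odd_edge u v : [set u; v] \in E -> #|even_vertices E| = 0 ->
  1 < degree E u -> 1 < degree E v -> reducible E.
Proof.
move=> uvE no_even; have [deg_u deg_v [cNI cEV leNI leEV]] := edge_removal uvE.
have odd_deg z : 0 < degree E z -> odd (degree E z).
  by move=> dz; move: (card0_eq no_even z); rewrite !inE dz /= => /negbFE.
have [odd_u odd_v] := (odd_deg u, odd_deg v).
move: cNI cEV leNI leEV odd_u odd_v; rewrite /= !inE deg_u deg_v /=.
move=> cNI cEV leNI leEV odd_u odd_v u2 v2.
have same_m : #|nonisolated (E :\ [set u; v])| = #|nonisolated E| by lia.
have two_k : #|even_vertices (E :\ [set u; v])| = 2 by lia.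
clear cNI cEV.
apply: (reducible_by (E' := E :\ [set u; v]) (delta := -1)
  (extend := fun f => set_sign f [set u; v] false)).
- exact: properD1.
- by rewrite two_k.
- move=> f st; apply: signed_star_set_sign => // _.
  by apply: edge_even_after_removal; rewrite ?deg_u ?deg_v //=; lia.
- by move=> f; rewrite signed_weight_set_sign.
- rewrite /weight_bound same_m two_k no_even; lia.
Qed.

Lemma reduce_path w x y : [set w; x] \in E -> [set x; y] \in E -> y != w ->
  w \in even_vertices E -> x \notin even_vertices E -> y \notin even_vertices E ->
  1 < degree E y -> reducible E.
Proof.
move=> wxE xyE yw; rewrite eq_sym in yw.
have [wxE' deg_w deg_x deg_y [cNI cEV leNI leEV]] := path_removal wxE xyE yw.
move: cNI cEV leNI leEV; rewrite /= !inE deg_w deg_x deg_y /=.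
move=> cNI cEV leNI leEV w_even x_odd y_odd y2.
have same_m : #|nonisolated (E :\ [set x; y] :\ [set w; x])| = #|nonisolated E| by lia.
have same_k : #|even_vertices (E :\ [set x; y] :\ [set w; x])| = #|even_vertices E| by lia.
clear cNI cEV.
apply: (reducible_by (E' := E :\ [set x; y] :\ [set w; x]) (delta := 0)
  (extend := fun f => set_sign (set_sign f [set w; x] true) [set x; y] false)).
- exact: sub_proper_trans (subD1set _ _) (properD1 xyE).
- by rewrite same_k.
- move=> f st; apply: signed_star_set_sign => //; first exact: signed_star_set_sign.
  by move=> _; apply: edge_even_after_removal; rewrite ?deg_x ?deg_y //=; lia.
- by move=> f; rewrite !signed_weight_set_sign //=; lia.
- by rewrite /weight_bound same_m same_k add0r.
Qed.

Lemma reduce_two_leaves x y1 y2 : [set x; y1] \in E -> [set x; y2] \in E -> y1 != y2 ->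
  x \notin even_vertices E -> degree E y1 = 1 -> degree E y2 = 1 -> reducible E.
Proof.
rewrite setUC => y1xE xy2E y12.
have [y1xE' deg_y1 deg_x deg_y2 [cNI cEV leNI leEV]] := path_removal y1xE xy2E y12.
move: cNI cEV leNI leEV; rewrite /= !inE deg_y1 deg_x deg_y2 /=.
move=> cNI cEV leNI leEV x_odd d1 d2.
have less_m : #|nonisolated (E :\ [set x; y2] :\ [set y1; x])| = #|nonisolated E| - 2.
  by lia.
have same_k : #|even_vertices (E :\ [set x; y2] :\ [set y1; x])| = #|even_vertices E|.
  by lia.
clear cNI cEV.
apply: (reducible_by (E' := E :\ [set x; y2] :\ [set y1; x]) (delta := 2)
  (extend := fun f => set_sign (set_sign f [set y1; x] true) [set x; y2] true)).
- exact: sub_proper_trans (subD1set _ _) (properD1 xy2E).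
- by rewrite same_k.
- by move=> f st; do 2 apply: signed_star_set_sign => //.
- by move=> f; rewrite !signed_weight_set_sign //=; lia.
- rewrite /weight_bound less_m same_k; lia.
Qed.

Lemma reduce_leaf_path w x u : #|even_vertices E| = 2 ->
  [set w; x] \in E -> [set x; u] \in E -> degree E u = 1 ->
  w \in even_vertices E -> x \notin even_vertices E -> reducible E.
Proof.
move=> two_even wxE xuE du w_even.
have wu : w != u by apply: contraTneq w_even => ->; rewrite inE du.
have [wxE' deg_w deg_x deg_u [cNI cEV leNI leEV]] := path_removal wxE xuE wu.
move: cNI cEV leNI leEV w_even; rewrite /= !inE deg_w deg_x deg_u /=.
move=> cNI cEV leNI leEV w_even x_odd.
have less_m : #|nonisolated (E :\ [set x; u] :\ [set w; x])| = #|nonisolated E| - 1.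
  by lia.
have one_k : #|even_vertices (E :\ [set x; u] :\ [set w; x])| = 1 by lia.
clear cNI cEV.
apply: (reducible_by (E' := E :\ [set x; u] :\ [set w; x]) (delta := 2)
  (extend := fun f => set_sign (set_sign f [set w; x] true) [set x; u] true)).
- exact: sub_proper_trans (subD1set _ _) (properD1 xuE).
- by rewrite one_k.
- by move=> f st; do 2 apply: signed_star_set_sign => //.
- by move=> f; rewrite !signed_weight_set_sign //=; lia.
- rewrite /weight_bound less_m one_k two_even; lia.
Qed.

Lemma two_even_vertices w y : w \in even_vertices E -> y \in even_vertices E -> w != y ->
  #|even_vertices E| = 2.
Proof.
move=> w_even y_even wy; have := count_mem_le_card (even_vertices E) (s := [:: w; y]).
by rewrite /= w_even y_even inE wy /= => /(_ isT); lia.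
Qed.

Lemma no_three_even_vertices w y1 y2 : w \in even_vertices E -> y1 \in even_vertices E ->
  y2 \in even_vertices E -> w != y1 -> w != y2 -> y1 != y2 -> False.
Proof.
move=> w_even y1_even y2_even wy1 wy2 y12.
have := count_mem_le_card (even_vertices E) (s := [:: w; y1; y2]).
by rewrite /= w_even y1_even y2_even !inE !negb_or wy1 wy2 y12 /= => /(_ isT); lia.
Qed.

Lemma reduce_leaf_neighbors w x : [set w; x] \in E ->
  w \in even_vertices E -> x \notin even_vertices E -> 1 < degree E x ->
  (forall y, [set x; y] \in E -> y != w -> degree E y = 1 \/ y \in even_vertices E) ->
  reducible E.
Proof.
move=> wxE w_even x_odd x2 leaf_or_even.
have x3 : 2 < degree E x by move: x_odd x2; rewrite inE; case: (degree E x) => [|[|[|n]]].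
have [y1 xy1E] : exists2 y, [set x; y] \in E & y \notin [set w].
  by apply: exists_neighbor_notin; rewrite cards1; lia.
rewrite inE => y1w.
have [y2 xy2E] : exists2 y, [set x; y] \in E & y \notin [set w; y1].
  by apply: exists_neighbor_notin; rewrite cards2; lia.
rewrite !inE negb_or => /andP[y2w y2y1].
case: (leaf_or_even y1 xy1E y1w) => [d1 | y1_even];
  case: (leaf_or_even y2 xy2E y2w) => [d2 | y2_even].
- by apply: reduce_two_leaves xy1E xy2E _ x_odd d1 d2; rewrite eq_sym.
- have two_even : #|even_vertices E| = 2.
    by apply: (two_even_vertices w_even y2_even); rewrite eq_sym.
  exact: reduce_leaf_path two_even wxE xy1E d1 w_even x_odd.
- have two_even : #|even_vertices E| = 2.
    by apply: (two_even_vertices w_even y1_even); rewrite eq_sym.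
  exact: reduce_leaf_path two_even wxE xy2E d2 w_even x_odd.
by case: (no_three_even_vertices w_even y1_even y2_even); rewrite // eq_sym.
Qed.

Lemma reducible_even w : w \in even_vertices E -> reducible E.
Proof.
move=> w_even; have w_pos : 0 < degree E w by move: w_even; rewrite inE => /andP[].
have edge_pos a b : [set a; b] \in E -> 0 < degree E b.
  by move=> abE; have [_ -> _] := edge_removal abE.
case: (boolP [exists u, ([set w; u] \in E) && (degree E u == 1)]).
  case/existsP=> u /andP[wuE /eqP du].
  by apply: reduce_leaf du (or_intror w_even); rewrite setUC.
move=> /existsPn no_leaf.
case: (boolP [exists y, ([set w; y] \in E) && (y \in even_vertices E)]).
  by case/existsP=> y /andP[wyE y_even]; apply: reduce_even_edge wyE w_even y_even.
move=> /existsPn no_even_nb.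
have [x wxE _] : exists2 x, [set w; x] \in E & x \notin set0.
  by apply: exists_neighbor_notin; rewrite cards0.
have x_odd : x \notin even_vertices E by have := no_even_nb x; rewrite wxE.
have x2 : 1 < degree E x.
  by have := no_leaf x; have := edge_pos _ _ wxE; rewrite wxE /=; lia.
case: (boolP [exists y, [&& [set x; y] \in E, y != w, y \notin even_vertices E
                          & 1 < degree E y]]).
  case/existsP=> y /and4P[xyE yw y_odd y2].
  exact: reduce_path wxE xyE yw w_even x_odd y_odd y2.
move=> /existsPn no_path; apply: reduce_leaf_neighbors wxE w_even x_odd x2 _ => y xyE yw.
have := no_path y; have := edge_pos _ _ xyE.
by rewrite xyE yw /=; case: (y \in even_vertices E); [right | left; lia].
Qed.

Lemma reducible_no_even : #|even_vertices E| = 0 -> E != set0 -> reducible E.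
Proof.
move=> no_even /set0Pn[e eE].
have /cards2P[a [b [ab e_ab]]] : #|e| == 2 by rewrite E_simple.
rewrite {}e_ab in eE; have baE : [set b; a] \in E by rewrite setUC.
have [da db _] := edge_removal eE.
case: (eqVneq (degree E a) 1) => [da1 | da1].
  exact: reduce_leaf eE da1 (or_introl no_even).
case: (eqVneq (degree E b) 1) => [db1 | db1].
  exact: reduce_leaf baE db1 (or_introl no_even).
by apply: reduce_odd_edge eE no_even _ _; lia.
Qed.

Lemma reducible_nonempty : E != set0 -> reducible E.
Proof.
case: (posnP #|even_vertices E|) => [no_even | /card_gt0P[w w_even] _].
  exact: reducible_no_even.
exact: reducible_even w_even.
Qed.

End SimpleEdgeSet.

Lemma light_star_exists E :
  simple_edge_set E -> #|even_vertices E| <= 2 -> exists f, light_star E f.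
Proof.
have [n] := ubnP #|E|; elim: n E => // n IH E ltE E_simple few_even.
have [-> | nonempty] := eqVneq E set0.
  exists [ffun=> true]; split; last by rewrite /signed_weight big_set0.
  by move=> v; rewrite inE degree_set0.
have [E' ltE' [few_even' extend]] := reducible_nonempty E_simple few_even nonempty.
have E'_simple : simple_edge_set E'.
  by move=> e e_in; apply: E_simple; apply: (subsetP (proper_sub ltE')).
have [|f f_light] := IH E' _ E'_simple few_even'; last exact: extend f_light.
exact: leq_trans (proper_card ltE') _.
Qed.

Lemma sum_sgn_edge_union E f u v : simple_edge_set E -> [set u; v] \in E ->
  (\sum_(e in E | (u \in e) || (v \in e)) sgn (f e) =
   signed_degree E f u + signed_degree E f v - sgn (f [set u; v]))%R.
Proof.
move=> E_simple uvE; have uv := edge_neq E_simple uvE.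
rewrite /signed_degree (bigID (fun e => u \in e)) /=.
rewrite [X in (_ + X - _)%R](bigID (fun e => u \in e)) /=.
have -> : (\sum_(e | (e \in E) && (v \in e) && (u \in e)) sgn (f e) = sgn (f [set u; v]))%R.
  apply: big_pred1 => e; apply/andP/eqP => [[/andP[eE ve] ue] | ->].
    exact: (edge_eq_set2 E_simple eE ue ve uv).
  by rewrite uvE set21 set22.
rewrite (eq_bigl (fun e => (e \in E) && (u \in e))) => [|e]; last first.
  by case: (e \in E); case: (u \in e); rewrite /= ?andbT ?andbF.
rewrite [X in (_ + X = _)%R](eq_bigl (fun e => (e \in E) && (v \in e) && (u \notin e))) => [|e].
  by rewrite [(sgn _ + _)%R]addrC addrA addrK.
by case: (e \in E); case: (u \in e); rewrite /= ?andbT ?andbF.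
Qed.

End SignedStars.

(** * Graphs given by an adjacency relation *)

Section Graph.
Variables (T : finType) (adj : rel T).
Hypotheses (adj_sym : symmetric adj) (adj_irr : irreflexive adj).

Lemma edges_simple : simple_edge_set (edges adj).
Proof.
move=> e; rewrite inE => /existsP[x /existsP[y /andP[xy /eqP->]]].
by rewrite cards2; case: eqP xy => [-> | //]; rewrite adj_irr.
Qed.

Lemma edge_of_adj u v : adj u v -> [set u; v] \in edges adj.
Proof.
by move=> uv; rewrite inE; apply/existsP; exists u; apply/existsP; exists v; rewrite uv /=.
Qed.

Lemma degree_edges v : degree (edges adj) v = deg adj v.
Proof.
rewrite /degree /deg.
have -> : [set e in edges adj | v \in e] = [set [set v; w] | w in [set w | adj v w]].
  apply/setP => e; apply/idP/imsetP => [| [w]]; last first.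
    by rewrite inE => vw ->; rewrite inE edge_of_adj //= set21.
  rewrite !inE => /andP[/existsP[x /existsP[y /andP[xy /eqP->]]]].
  rewrite !inE => /orP[]/eqP->; first by exists y; rewrite ?inE.
  by exists x; rewrite ?inE 1?adj_sym // setUC.
by rewrite card_imset //; apply: set2_inj.
Qed.

Lemma signed_star_SEDF f : signed_star (edges adj) f -> is_SEDF adj f.
Proof.
move=> st; apply/forallP => u; apply/forallP => v; apply/implyP => uv.
have uvE := edge_of_adj uv; have [du dv _] := edge_removal edges_simple uvE.
have [su sv] : (0 < signed_degree (edges adj) f u)%R /\ (0 < signed_degree (edges adj) f v)%R.
  by split; apply: st; rewrite inE ?du ?dv.
rewrite /closed_sum sum_sgn_edge_union //; last exact: edges_simple.
by case: (f _) => /=; lia.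
Qed.

End Graph.

Theorem mainTheorem8 (T : finType) (adj : rel T)
    (adj_sym : symmetric adj) (adj_irr : irreflexive adj)
    (Heven : v_even adj = 1%N) :
  (gamma_s' adj <= (Posz #|T| - 1)%R)%R.
Proof.
have few_even : #|even_vertices (edges adj)| <= 1.
  rewrite -Heven; apply/subset_leq_card/subsetP => v.
  by rewrite !inE degree_edges // => /andP[].
have [f [f_star f_light]] :=
  light_star_exists (edges_simple adj_irr) (leq_trans few_even (leqnSn 1)).
apply: le_trans (bigmin_le_cond _ _ (signed_star_SEDF adj_irr f_star)) _.
apply: le_trans f_light _; rewrite /weight_bound.
have := max_card (nonisolated (edges adj)); have := max_card [set v | ~~ odd (deg adj v)].
by rewrite -/(v_even adj) Heven; lia.
Qed.
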